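(* Let $\bm x \in \Delta_n \setminus \{\bm e_1,\dots,\bm e_n,\tfrac1n\bm e\}$ and $p \geqslant 2$. Let $S_p = \sum_{i=1}^n x_i^p$ and $w_i = x_i^p/S_p$ for $i=1,\dots,n$, and $\bm w = (w_1,\dots,w_n)$. Then the Shannon entropy $H(\bm w) = -\sum_{i=1}^n w_i \ln w_i$ satisfies $$0 \leqslant H(\bm w) \leqslant -\frac{p}{p-1}\ln \|\bm x\|_p.$$
   Context: $\|\bm x\|_p = (\sum_{i=1}^n x_i^p)^{1/p}$; $\Delta_n = \{\bm x \in \mathbb{R}^n_{\geqslant 0} : \sum_{i=1}^n x_i = 1\}$; $\bm e_i$ is the $i$-th standard unit vector and $\bm e$ the all-ones vector in $\mathbb{R}^n$. The convention $0\ln 0 = 0$ is used. *)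

From Stdlib Require Import Reals.
Open Scope R_scope.

(* finite sum  \sum_{i=0}^{n-1} f i  (vector entries indexed 0..n-1) *)
Fixpoint fsum (n : nat) (f : nat -> R) : R :=
  match n with
  | O => 0
  | S m => fsum m f + f m
  end.

(* real power t^p for t >= 0, with 0^p = 0 (p > 0) *)
Definition rpow (t p : R) : R := if Req_EM_T t 0 then 0 else Rpower t p.

Definition in_simplex (n : nat) (x : nat -> R) : Prop :=
  (forall i, (i < n)%nat -> 0 <= x i) /\ fsum n x = 1.

Definition is_unit_vector (n : nat) (x : nat -> R) (i : nat) : Prop :=
  forall j, (j < n)%nat -> x j = if Nat.eqb j i then 1 else 0.

Definition is_barycenter (n : nat) (x : nat -> R) : Prop :=
  forall j, (j < n)%nat -> x j = / INR n.

Definition pnorm (n : nat) (p : R) (x : nat -> R) : R :=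
  rpow (fsum n (fun i => rpow (x i) p)) (/ p).

Definition xlnx (t : R) : R := if Req_EM_T t 0 then 0 else t * ln t.

Definition entropy (n : nat) (w : nat -> R) : R := - fsum n (fun i => xlnx (w i)).

(** Since [ln w_i = p ln x_i - ln S_p], Gibbs' inequality [H(w) <= - sum_i w_i ln x_i]
    (cross entropy dominates entropy) reads [H(w) <= (H(w) - ln S_p) / p], that is
    [(p - 1) H(w) <= - ln S_p = - p ln ||x||_p].  Non-negativity holds because every
    [w_i <= 1]. *)

From Stdlib Require Import Reals Lra Lia.
Open Scope R_scope.

Lemma fsum_ext n f g :
  (forall i, (i < n)%nat -> f i = g i) -> fsum n f = fsum n g.
Proof.
  induction n as [|n IH]; simpl; intros H; auto.
  rewrite IH, H; auto.
Qed.

Lemma fsum_le n f g :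
  (forall i, (i < n)%nat -> f i <= g i) -> fsum n f <= fsum n g.
Proof.
  induction n as [|n IH]; simpl; intros H; [lra|].
  assert (fsum n f <= fsum n g) by (apply IH; auto).
  assert (f n <= g n) by (apply H; auto).
  lra.
Qed.

Lemma fsum_add n f g :
  fsum n (fun i => f i + g i) = fsum n f + fsum n g.
Proof. induction n as [|n IH]; simpl; [ring | rewrite IH; ring]. Qed.

Lemma fsum_scal n c f : fsum n (fun i => c * f i) = c * fsum n f.
Proof. induction n as [|n IH]; simpl; [ring | rewrite IH; ring]. Qed.

Lemma fsum_opp n f : fsum n (fun i => - f i) = - fsum n f.
Proof. induction n as [|n IH]; simpl; [ring | rewrite IH; ring]. Qed.

Lemma fsum_nonneg n f :
  (forall i, (i < n)%nat -> 0 <= f i) -> 0 <= fsum n f.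
Proof.
  induction n as [|n IH]; simpl; intros H; [lra|].
  assert (0 <= fsum n f) by (apply IH; auto).
  assert (0 <= f n) by (apply H; auto).
  lra.
Qed.

Lemma fsum_term_le n f j :
  (forall i, (i < n)%nat -> 0 <= f i) -> (j < n)%nat -> f j <= fsum n f.
Proof.
  induction n as [|n IH]; simpl; intros H Hj; [lia|].
  destruct (Nat.eq_dec j n) as [->|Hjn].
  - assert (0 <= fsum n f) by (apply fsum_nonneg; auto). lra.
  - assert (f j <= fsum n f) by (apply IH; auto; lia).
    assert (0 <= f n) by (apply H; auto).
    lra.
Qed.

Lemma fsum_pos_exists n f :
  0 < fsum n f -> exists i, (i < n)%nat /\ 0 < f i.
Proof.
  induction n as [|n IH]; simpl; intros H; [lra|].
  destruct (Rle_lt_dec (f n) 0) as [Hn|Hn].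
  - destruct IH as [i [Hi Hfi]]; [lra|]. exists i; split; [lia | exact Hfi].
  - exists n; split; [lia | exact Hn].
Qed.

Lemma rpow_nonneg t p : 0 <= rpow t p.
Proof.
  unfold rpow, Rpower; destruct Req_EM_T; [lra | left; apply exp_pos].
Qed.

Lemma rpow_pos t p : 0 < t -> 0 < rpow t p.
Proof.
  intros Ht; unfold rpow, Rpower; destruct Req_EM_T; [lra | apply exp_pos].
Qed.

Lemma ln_rpow t p : 0 < t -> ln (rpow t p) = p * ln t.
Proof.
  intros Ht; unfold rpow; destruct Req_EM_T; [lra | apply ln_Rpower].
Qed.

Lemma ln_le_sub_1 y : 0 < y -> ln y <= y - 1.
Proof.
  intros Hy; pose proof (exp_ineq1_le (ln y)) as H.
  rewrite exp_ln in H; lra.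
Qed.

Lemma xlnx_pos t : 0 < t -> xlnx t = t * ln t.
Proof. intros Ht; unfold xlnx; destruct Req_EM_T; [lra | reflexivity]. Qed.

Lemma xlnx_nonpos t : 0 <= t <= 1 -> xlnx t <= 0.
Proof.
  intros Ht; unfold xlnx; destruct Req_EM_T; [lra|].
  assert (ln t <= t - 1) by (apply ln_le_sub_1; lra).
  nra.
Qed.

Lemma mul_ln_ratio_le a w : 0 < a -> 0 < w -> w * (ln a - ln w) <= a - w.
Proof.
  intros Ha Hw.
  assert (Hratio : ln a - ln w = ln (a / w)).
  { unfold Rdiv; rewrite ln_mult, ln_Rinv; auto with real. }
  rewrite Hratio.
  apply Rmult_le_reg_l with (/ w); [auto with real|].
  replace (/ w * (w * ln (a / w))) with (ln (a / w)) by (field; lra).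
  replace (/ w * (a - w)) with (a / w - 1) by (field; lra).
  apply ln_le_sub_1, Rdiv_lt_0_compat; assumption.
Qed.

(* Gibbs' inequality for a single coordinate, with [ln w = p ln a - ln S] substituted. *)
Lemma power_weight_xlnx_le a p S :
  0 <= a -> 0 <= p -> 0 < S ->
  let w := rpow a p / S in
  (p - 1) * - xlnx w <= - ln S * w + p * (a - w).
Proof.
  intros Ha Hp HS w.
  destruct (Req_dec a 0) as [->|Ha0].
  - assert (Hw : w = 0) by (unfold w, rpow; destruct Req_EM_T; [field|]; lra).
    rewrite Hw; unfold xlnx; destruct Req_EM_T; lra.
  - assert (Hw : 0 < w) by (apply Rdiv_lt_0_compat; [apply rpow_pos|]; lra).
    assert (Hlnw : ln w = p * ln a - ln S).
    { unfold w, Rdiv. rewrite ln_mult, ln_Rinv, ln_rpow; auto with real; try lra.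
      apply rpow_pos; lra. }
    pose proof (mul_ln_ratio_le a w ltac:(lra) Hw) as Hgibbs.
    rewrite xlnx_pos by exact Hw.
    replace ((p - 1) * - (w * ln w)) with (p * (w * (ln a - ln w)) - ln S * w)
      by (rewrite Hlnw; ring).
    assert (p * (w * (ln a - ln w)) <= p * (a - w)) by (apply Rmult_le_compat_l; lra).
    lra.
Qed.

Definition power_sum (n : nat) (p : R) (x : nat -> R) : R :=
  fsum n (fun i => rpow (x i) p).

Definition escort (n : nat) (p : R) (x : nat -> R) (i : nat) : R :=
  rpow (x i) p / power_sum n p x.

Section Escort.

Variables (n : nat) (p : R) (x : nat -> R).
Hypothesis simplex_x : in_simplex n x.

Lemma power_sum_pos : 0 < power_sum n p x.
Proof.
  destruct simplex_x as [Hx Hsum].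
  destruct (fsum_pos_exists n x) as [j [Hj Hxj]]; [lra|].
  apply Rlt_le_trans with (rpow (x j) p); [apply rpow_pos; exact Hxj|].
  apply (fsum_term_le n (fun i => rpow (x i) p)); auto using rpow_nonneg.
Qed.

Lemma escort_sum : fsum n (escort n p x) = 1.
Proof.
  pose proof power_sum_pos as HS.
  unfold escort, Rdiv.
  rewrite (fsum_ext n _ (fun i => / power_sum n p x * rpow (x i) p))
    by (intros; ring).
  rewrite fsum_scal; fold (power_sum n p x); field; lra.
Qed.

Lemma escort_bounds i : (i < n)%nat -> 0 <= escort n p x i <= 1.
Proof.
  intros Hi; pose proof power_sum_pos as HS; unfold escort.
  assert (rpow (x i) p <= power_sum n p x).
  { apply (fsum_term_le n (fun j => rpow (x j) p)); auto using rpow_nonneg. }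
  unfold Rdiv; split.
  - apply Rmult_le_pos; [apply rpow_nonneg | left; apply Rinv_0_lt_compat, HS].
  - apply Rmult_le_reg_r with (power_sum n p x); [exact HS|].
    rewrite Rmult_assoc, Rinv_l, Rmult_1_r, Rmult_1_l by lra; assumption.
Qed.

Lemma entropy_escort_nonneg : 0 <= entropy n (escort n p x).
Proof.
  unfold entropy; rewrite <- fsum_opp.
  apply fsum_nonneg; intros i Hi.
  pose proof (xlnx_nonpos _ (escort_bounds i Hi)).
  lra.
Qed.

Lemma entropy_escort_le :
  0 <= p -> (p - 1) * entropy n (escort n p x) <= - ln (power_sum n p x).
Proof.
  intros Hp; pose proof power_sum_pos as HS.
  destruct simplex_x as [Hx Hsum].
  set (S := power_sum n p x).
  unfold entropy; rewrite <- fsum_opp, <- fsum_scal.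
  apply Rle_trans with
    (fsum n (fun i => - ln S * escort n p x i + p * (x i - escort n p x i))).
  - apply fsum_le; intros i Hi.
    apply power_weight_xlnx_le; auto.
  - right.
    rewrite fsum_add, fsum_scal, fsum_scal.
    unfold Rminus; rewrite fsum_add, fsum_opp, Hsum, escort_sum; ring.
Qed.

Lemma ln_pnorm : p <> 0 -> ln (pnorm n p x) = ln (power_sum n p x) / p.
Proof.
  intros Hp; pose proof power_sum_pos as HS.
  unfold pnorm; fold (power_sum n p x).
  rewrite ln_rpow by exact HS; field; exact Hp.
Qed.

End Escort.

Theorem lemma2 (n : nat) (x : nat -> R) (p : R) :
  in_simplex n x ->
  (forall i, (i < n)%nat -> ~ is_unit_vector n x i) ->
  ~ is_barycenter n x ->
  2 <= p ->
  let Sp := fsum n (fun i => rpow (x i) p) in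
  let w := fun i => rpow (x i) p / Sp in
  0 <= entropy n w /\
  entropy n w <= - (p / (p - 1)) * ln (pnorm n p x).
Proof.
  intros Hx _ _ Hp Sp w.
  change w with (escort n p x).
  split; [apply entropy_escort_nonneg; exact Hx|].
  pose proof (entropy_escort_le n p x Hx ltac:(lra)) as Hbound.
  rewrite (ln_pnorm n p x Hx) by lra.
  apply Rmult_le_reg_l with (p - 1); [lra|].
  replace ((p - 1) * (- (p / (p - 1)) * (ln (power_sum n p x) / p)))
    with (- ln (power_sum n p x)) by (field; lra).
  exact Hbound.
Qed.
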